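(* Let $f({\bm\alpha})=G_{\bf w}({\bm\mu}{\bm\alpha})$ on $\Delta_K$. The set $\Delta_K^*=\operatorname{argmin}_{{\bm\alpha}\in\Delta_K}f({\bm\alpha})$ is a convex polytope. Moreover, \[ g^*=\inf_{{\bm\alpha}\in\Delta_K\setminus\Delta_K^*}\ \max_{{\bm\alpha}^*\in\Delta_K^*}\frac{f({\bm\alpha})-f({\bm\alpha}^* )}{\|{\bm\alpha}-{\bm\alpha}^*\|} \] is positive.
   Context: ${\bm\mu}$ is a $D\times K$ real matrix with entries in $[0,1]$ (column $k$ is the mean cost vector of arm $k$). GGI: ${\bf w}\in[0,1]^D$ with $w_1>w_2>\dots>w_D$, $G_{\bf w}({\bf x})=\sum_{d=1}^Dw_dx_{\sigma(d)}$ with $\sigma$ a permutation sorting ${\bf x}$ in decreasing order. $\Delta_K=\{{\bm\alpha}\in\mathbb R^K:\sum_k\alpha_k=1,{\bm\alpha}\succeq0\}$; $\|\cdot\|$ is the Euclidean norm. *)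

From mathcomp Require Import all_boot all_order all_algebra.
From mathcomp Require Import reals.
Set Implicit Arguments. Unset Strict Implicit. Unset Printing Implicit Defensive.
Import Order.TTheory GRing.Theory Num.Theory.
Local Open Scope ring_scope.

Definition GGI (R : realType) (D : nat) (w : 'I_D -> R) (x : 'cV[R]_D) : R :=
  let s := sort (fun a b : R => b <= a) [seq x i 0 | i <- enum 'I_D] in
  \sum_(d < D) w d * nth 0 s d.

Definition simplex (R : realType) (K : nat) (a : 'cV[R]_K) : Prop :=
  (forall k, 0 <= a k 0) /\ \sum_(k < K) a k 0 = 1.

Definition enorm (R : realType) (K : nat) (a : 'cV[R]_K) : R :=
  Num.sqrt (\sum_(k < K) a k 0 ^+ 2).

Definition ggi_obj (R : realType) (D K : nat) (w : 'I_D -> R)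
  (mu : 'M[R]_(D, K)) (a : 'cV[R]_K) : R := GGI w (mu *m a).

Definition argmin_set (R : realType) (D K : nat) (w : 'I_D -> R)
  (mu : 'M[R]_(D, K)) (a : 'cV[R]_K) : Prop :=
  simplex a /\ forall b, simplex b -> ggi_obj w mu a <= ggi_obj w mu b.

Definition convex_polytope (R : realType) (K : nat) (S : 'cV[R]_K -> Prop) : Prop :=
  exists (n : nat) (P : 'I_n -> 'cV[R]_K),
    forall x, S x <-> exists l : 'I_n -> R,
      (forall i, 0 <= l i) /\ \sum_(i < n) l i = 1 /\ x = \sum_(i < n) l i *: P i.

(* By the rearrangement inequality, f is the maximum of the finitely many linear
   forms  alpha |-> sum_d w_d (mu alpha)_(s d),  s a permutation.  Hence the
   truncated epigraph  {(alpha, t) | alpha in Delta_K, f alpha <= t <= D + 1}  is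
   the prism  Delta_K x [0, D + 1]  cut by finitely many halfspaces, and cutting a
   polytope by a halfspace gives a polytope again (pair every vertex where the form
   is positive with every vertex where it is negative and keep the zero of the form
   on the segment between them).  Let m be the least height of a vertex of this
   polytope: m = min f, and the minimizers are the convex hull of the vertices of
   height m.  Writing (alpha, f alpha) as a convex combination of vertices and
   moving the weight s of the non-optimal ones to optimal vertices gives a
   minimizer alpha' with  |alpha - alpha'| <= M s  and  f alpha - f alpha' >= delta s,
   where delta > 0 is the least height gap; so g* >= delta / M > 0. *)

From HB Require Import structures.
From mathcomp Require Import all_boot all_order all_algebra all_fingroup.
From mathcomp Require Import reals ring zify.
Set Implicit Arguments. Unset Strict Implicit. Unset Printing Implicit Defensive.
Import Order.TTheory GRing.Theory Num.Theory.
Local Open Scope ring_scope.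

Section ConvexCombination.
Variables (R : realDomainType) (I : finType) (l : I -> R).
Hypotheses (l_ge0 : forall i, 0 <= l i) (l_sum1 : \sum_i l i = 1).

Lemma convex_comb_ge (F : I -> R) c : (forall i, c <= F i) -> c <= \sum_i l i * F i.
Proof.
move=> cF; rewrite -[c]mul1r -l_sum1 mulr_suml.
by apply: ler_sum => i _; apply: ler_wpM2l.
Qed.

Lemma convex_comb_le (F : I -> R) c : (forall i, F i <= c) -> \sum_i l i * F i <= c.
Proof.
move=> Fc; rewrite -[c]mul1r -l_sum1 mulr_suml.
by apply: ler_sum => i _; apply: ler_wpM2l.
Qed.

End ConvexCombination.

Section HalfspaceCut.
Variables (R : realFieldType) (I : finType) (G l : I -> R).
Hypotheses (l_ge0 : forall i, 0 <= l i) (lG_le0 : \sum_i l i * G i <= 0).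

Definition cut_vertex (k : I + I * I) : bool :=
  match k with inl i => G i <= 0 | inr (i, j) => (0 < G i) && (G j < 0) end.

Definition cut_point (W : lmodType R) (p : I -> W) (k : I + I * I) : W :=
  match k with
  | inl i => p i
  | inr (i, j) => (G i - G j)^-1 *: (G i *: p j - G j *: p i)
  end.

Let A := \sum_(i | 0 < G i) l i * G i.
Let B := \sum_(j | G j < 0) l j * - G j.

(* Each pair i, j with G i > 0 > G j gets weight proportional to l i l j and the
   zero of G on [p i, p j]; the fraction A / B of the negative mass is used up by
   these pairs.  If B = 0 then A = 0, and A / B = 0 by the convention x / 0 = 0. *)
Definition cut_weight (k : I + I * I) : R :=
  match k with
  | inl i => (if G i < 0 then 1 - A / B else 1) * l i
  | inr (i, j) => l i * l j * (G i - G j) / B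
  end.

Lemma sum_nonpos_by_sign (W : nmodType) (F : I -> W) :
  \sum_(i | G i <= 0) F i = \sum_(i | G i < 0) F i + \sum_(i | G i == 0) F i.
Proof.
by rewrite (bigID (fun i => G i < 0)) /=; congr (_ + _); apply: eq_bigl => i; case: ltgtP.
Qed.

Lemma sum_by_sign (W : nmodType) (F : I -> W) :
  \sum_i F i = \sum_(i | G i < 0) F i + \sum_(i | G i == 0) F i + \sum_(i | 0 < G i) F i.
Proof.
rewrite (bigID (fun i => G i <= 0)) /= sum_nonpos_by_sign; congr (_ + _).
by apply: eq_bigl => i; rewrite ltNge.
Qed.

Let A_ge0 : 0 <= A.
Proof. by apply: sumr_ge0 => i /ltW Gi; rewrite mulr_ge0. Qed.

Let B_ge0 : 0 <= B.
Proof. by apply: sumr_ge0 => j /ltW Gj; rewrite mulr_ge0 ?oppr_ge0. Qed.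

Let A_le_B : A <= B.
Proof.
have lGE : \sum_i l i * G i = A - B.
  rewrite sum_by_sign [X in _ + X + _]big1 => [|i /eqP ->]; last by rewrite mulr0.
  rewrite addr0 addrC /B -sumrN; congr (_ + _).
  by apply: eq_bigr => j _; rewrite mulrN opprK.
by rewrite -subr_le0 -lGE.
Qed.

Let B_cancel i : 0 < G i -> B * l i / B = l i.
Proof.
move=> Gi; have [B0|] := eqVneq B 0; last by move=> B0; rewrite mulrAC divff ?mul1r.
have A0 : A = 0 by apply/eqP; rewrite eq_le A_ge0 -B0 A_le_B.
have /eqP : l i * G i = 0.
  by apply: (psumr_eq0P _ A0) => // j /ltW Gj; rewrite mulr_ge0.
by rewrite mulf_eq0 (gt_eqF Gi) orbF => /eqP ->; rewrite mulr0 mul0r.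
Qed.

Lemma cut_weight_ge0 k : cut_vertex k -> 0 <= cut_weight k.
Proof.
case: k => [i|[i j]] /=.
  move=> _; rewrite mulr_ge0 //; case: ltP => // _.
  have [->|B0] := eqVneq B 0; first by rewrite invr0 mulr0 subr0.
  by rewrite subr_ge0 ler_pdivrMr ?mul1r // lt_def B0 B_ge0.
by case/andP=> Gi Gj; rewrite divr_ge0 // !mulr_ge0 // subr_ge0 ltW // (lt_trans Gj).
Qed.

Let crossing_comb (W : lmodType R) (p : I -> W) :
  \sum_(k : I * I | cut_vertex (inr k)) cut_weight (inr k) *: cut_point p (inr k) =
  \sum_(j | G j < 0) (A / B * l j) *: p j + \sum_(i | 0 < G i) l i *: p i.
Proof.
transitivity (\sum_(i | 0 < G i) \sum_(j | G j < 0)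
    ((l i * G i * l j / B) *: p j + (l j * - G j * l i / B) *: p i)).
  rewrite pair_big_dep; apply: eq_big => [[i j] //|[i j] /andP [Gi Gj]] /=.
  have GE : G i - G j != 0 by rewrite subr_eq0 gt_eqF // (lt_trans Gj).
  rewrite scalerA mulrAC mulfK // scalerBr !scalerA -scaleNr.
  by congr (_ *: _ + _ *: _); ring.
rewrite (eq_bigr _ (fun i _ => big_split _ _ _ _ _)) big_split /=.
rewrite (exchange_big_dep (fun j => G j < 0)) //=; congr (_ + _).
  apply: eq_bigr => j Gj; rewrite -scaler_suml; congr (_ *: _).
  rewrite /A !mulr_suml; apply: eq_big => [i|i _]; [by rewrite Gj andbT|ring].
apply: eq_bigr => i Gi; rewrite -scaler_suml -[in RHS](B_cancel Gi); congr (_ *: _).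
by rewrite /B !mulr_suml; apply: eq_bigr => j _; ring.
Qed.

Lemma cut_weight_comb (W : lmodType R) (p : I -> W) :
  \sum_(k | cut_vertex k) cut_weight k *: cut_point p k = \sum_i l i *: p i.
Proof.
transitivity (\sum_(i | G i <= 0) cut_weight (inl i) *: p i +
  \sum_(k : I * I | cut_vertex (inr k)) cut_weight (inr k) *: cut_point p (inr k)).
  by rewrite big_sumType.
rewrite crossing_comb [RHS]sum_by_sign addrA; congr (_ + _).
rewrite sum_nonpos_by_sign addrAC -big_split; congr (_ + _).
  by apply: eq_bigr => i /= Gi; rewrite Gi -scalerDl -mulrDl subrK mul1r.
by apply: eq_bigr => i /eqP /= ->; rewrite ltxx mul1r.
Qed.

Lemma cut_weight_sum : \sum_(k | cut_vertex k) cut_weight k = \sum_i l i.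
Proof.
transitivity (\sum_i l i *: (1 : R^o)); last first.
  by apply: eq_bigr => i _; rewrite [_ *: _]mulr1.
rewrite -cut_weight_comb; apply: eq_bigr => -[i|[i j]] /=.
  by rewrite [_ *: 1]mulr1.
case/andP=> Gi Gj; rewrite [_ *: 1]mulr1 [_ *: (_ - _)]mulrBr ![_ *: 1]mulr1.
have GE : G i - G j != 0 by rewrite subr_eq0 gt_eqF // (lt_trans Gj).
by rewrite -mulrBr mulVf // [_ *: 1]mulr1.
Qed.

End HalfspaceCut.

Section ConvexHull.
Variables (R : realFieldType) (V : lmodType R).

Definition hull (I : finType) (P : I -> V) (x : V) : Prop :=
  exists l : I -> R, (forall i, 0 <= l i) /\ \sum_i l i = 1 /\ x = \sum_i l i *: P i.

Lemma hull_point (I : finType) (P : I -> V) i : hull P (P i).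
Proof.
exists (fun j => if j == i then 1 else 0); split; [|split].
- by move=> j; case: (j == i).
- by rewrite (bigD1 i) //= eqxx big1 ?addr0 // => j /negbTE ->.
- by rewrite (bigD1 i) //= eqxx scale1r big1 ?addr0 // => j /negbTE ->; rewrite scale0r.
Qed.

Lemma hull_segment (I : finType) (P : I -> V) i j a b :
  0 <= a -> 0 <= b -> a + b = 1 -> hull P (a *: P i + b *: P j).
Proof.
move=> a0 b0 ab1.
exists (fun k => (if k == i then a else 0) + (if k == j then b else 0)); split; [|split].
- by move=> k; apply: addr_ge0; [case: (k == i)|case: (k == j)].
- rewrite big_split /= (bigD1 i) //= eqxx big1 ?addr0; last by move=> k /negbTE ->.
  by rewrite (bigD1 j) //= eqxx big1 ?addr0 // => k /negbTE ->.
- under eq_bigr do rewrite scalerDl.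
  rewrite big_split /= (bigD1 i) //= eqxx big1 ?addr0; last first.
    by move=> k /negbTE ->; rewrite scale0r.
  by rewrite (bigD1 j) //= eqxx big1 ?addr0 // => k /negbTE ->; rewrite scale0r.
Qed.

Lemma hull_trans (I J : finType) (P : I -> V) (Q : J -> V) x :
  (forall j, hull P (Q j)) -> hull Q x -> hull P x.
Proof.
move=> QP [m [m0 [m1 ->]]]; have [L hL] := fin_all_exists QP.
exists (fun i => \sum_j m j * L j i); split; [|split].
- move=> i; apply: sumr_ge0 => j _; apply: mulr_ge0 => //; by case: (hL j).
- rewrite exchange_big -[RHS]m1; apply: eq_bigr => j _.
  by rewrite -mulr_sumr; case: (hL j) => _ [-> _]; rewrite mulr1.
- under eq_bigr => j _ do rewrite (proj2 (proj2 (hL j))) scaler_sumr.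
  rewrite exchange_big; apply: eq_bigr => i _; rewrite scaler_suml.
  by apply: eq_bigr => j _; rewrite scalerA.
Qed.

Lemma hull_subfamily (I : finType) (A : {pred I}) (P : I -> V) x :
  hull (fun k : {i in A} => P (val k)) x -> hull P x.
Proof. by apply: hull_trans => k; apply: hull_point. Qed.

Lemma hull_sub_sum (I : finType) (A : {pred I}) (P : I -> V) (l : I -> R) :
  (forall i, i \in A -> 0 <= l i) -> \sum_(i in A) l i = 1 ->
  hull (fun k : {i in A} => P (val k)) (\sum_(i in A) l i *: P i).
Proof.
move=> l0 l1; exists (fun k => l (val k)); split=> [k|]; first exact/l0/valP.
by split; rewrite ?(big_sub A) // -l1 (big_sub A).
Qed.

Lemma hull_enum (I : finType) (P : I -> V) x :
  hull P x <-> hull (fun i : 'I_#|I| => P (enum_val i)) x.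
Proof.
split; apply: hull_trans => i; last exact: hull_point.
by rewrite -[i]enum_rankK; apply: hull_point.
Qed.

Lemma scalar_hull_le (I : finType) (P : I -> V) (g : {scalar V}) c x :
  (forall i, g (P i) <= c) -> hull P x -> g x <= c.
Proof.
move=> gP [l [l0 [l1 ->]]]; rewrite linear_sum.
under eq_bigr do rewrite scalarZ.
exact: convex_comb_le.
Qed.

Lemma hull_halfspace (I : finType) (P : I -> V) (g : {scalar V}) :
  exists (J : finType) (Q : J -> V), forall x, hull P x /\ g x <= 0 <-> hull Q x.
Proof.
pose G i := g (P i).
exists {k in cut_vertex G}, (fun k => cut_point G P (val k)) => x; split.
  case=> -[l [l0 [l1 ->]]]; rewrite linear_sum.
  under eq_bigr do rewrite scalarZ.
  move=> lG; rewrite -(cut_weight_comb l0 lG); apply: hull_sub_sum.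
    by move=> k; apply: cut_weight_ge0.
  by rewrite (cut_weight_sum l0 lG).
move=> hx; split.
  apply: hull_trans hx => -[[i|[i j]] /= vk]; first exact: hull_point.
  case/andP: vk => Gi Gj; have GE : G i - G j != 0.
    by rewrite subr_eq0 gt_eqF // (lt_trans Gj).
  rewrite scalerBr !scalerA addrC -scaleNr -mulrN.
  have Gij : 0 < G i - G j by rewrite subr_gt0 (lt_trans Gj).
  apply: hull_segment;
    rewrite ?mulr_ge0 ?invr_ge0 ?oppr_ge0 ?(ltW Gi) ?(ltW Gj) ?(ltW Gij) //.
  by rewrite -mulrDr [- G j + _]addrC mulVf.
apply: scalar_hull_le hx => -[[i|[i j]] /= vk] //.
by rewrite scalarZ linearB !scalarZ -/(G i) -/(G j) [G j * _]mulrC subrr mulr0.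
Qed.

Lemma hull_halfspaces (I A : finType) (P : I -> V) (g : A -> {scalar V}) :
  exists (J : finType) (Q : J -> V),
    forall x, hull P x /\ (forall a, g a x <= 0) <-> hull Q x.
Proof.
suff [J [Q hQ]] : exists (J : finType) (Q : J -> V),
    forall x, hull P x /\ (forall a, a \in enum A -> g a x <= 0) <-> hull Q x.
  exists J, Q => x; rewrite -hQ.
  by split=> -[Px gx]; split=> // a; apply: gx; rewrite mem_enum.
elim: (enum A) => [|a s [J [Q hQ]]]; first by exists I, P => x; split=> [[]|].
have [J' [Q' hQ']] := hull_halfspace Q (g a).
exists J', Q' => x; rewrite -hQ' -hQ; split.
  case=> Px gx; split; first split=> // b bs.
    by apply: gx; rewrite inE bs orbT.
  by apply: gx; rewrite inE eqxx.
by case=> -[Px gx] gax; split=> // b; rewrite inE => /predU1P [->|]; last exact: gx.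
Qed.

End ConvexHull.

Section HullProduct.
Variables (R : realFieldType) (U W : lmodType R).

Lemma hull_linear (I : finType) (P : I -> U) (h : {linear U -> W}) x :
  hull P x -> hull (h \o P) (h x).
Proof.
case=> l [l_ge0 [l_sum1 ->]]; exists l; do !split=> //.
by rewrite linear_sum; apply: eq_bigr => i _; rewrite linearZ.
Qed.

Lemma hull_pair (I J : finType) (P : I -> U) (T : J -> W) x t :
  hull P x -> hull T t -> hull (fun ij : I * J => (P ij.1, T ij.2)) (x, t).
Proof.
case=> l [l_ge0 [l_sum1 ->]] [m [m_ge0 [m_sum1 ->]]].
exists (fun ij => l ij.1 * m ij.2); split=> [ij|]; first exact: mulr_ge0.
rewrite -(pair_bigA _ (fun i j => l i * m j)) /=.
under eq_bigr do rewrite -mulr_sumr m_sum1 mulr1.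
split=> //; rewrite [RHS]surjective_pairing !raddf_sum /=; congr pair.
  rewrite -(pair_bigA _ (fun i j => (l i * m j) *: P i)) /=.
  by apply: eq_bigr => i _; rewrite -scaler_suml -mulr_sumr m_sum1 mulr1.
rewrite -(pair_bigA _ (fun i j => (l i * m j) *: T j)) /= exchange_big /=.
by apply: eq_bigr => j _; rewrite -scaler_suml -mulr_suml l_sum1 mul1r.
Qed.

End HullProduct.

Lemma simplex_hull (R : realType) (K : nat) (x : 'cV[R]_K) :
  simplex x <-> hull (fun k => delta_mx k 0) x.
Proof.
have entry (l : 'I_K -> R) k : (\sum_i l i *: delta_mx i 0 : 'cV[R]_K) k 0 = l k.
  rewrite summxE (bigD1 k) //= big1 => [|i ik]; rewrite !mxE ?eqxx ?mulr1 ?addr0 //.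
  by rewrite eq_sym (negbTE ik) mulr0.
split=> [[x_ge0 x_sum1]|[l [l_ge0 [l_sum1 ->]]]].
  exists (fun k => x k 0); do !split=> //; apply/matrixP => i j.
  by rewrite (ord1 j) entry.
by split=> [k|]; rewrite ?entry //; under eq_bigr do rewrite entry.
Qed.

Section Rearrangement.
Variables (R : realDomainType) (D : nat).

Lemma prefix_sum_inj_le (z : 'I_D -> R) (rho : 'I_D -> 'I_D) (e : nat) :
  {homo z : d f / (d <= f)%N >-> f <= d} -> injective rho ->
  \sum_(d : 'I_D | (d <= e)%N) z (rho d) <= \sum_(d : 'I_D | (d <= e)%N) z d.
Proof.
move=> z_noninc rho_inj; set I := [set d : 'I_D | (d <= e)%N].
have sumI (F : 'I_D -> R) : \sum_(d : 'I_D | (d <= e)%N) F d = \sum_(d in I) F d.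
  by apply: eq_bigl => d; rewrite inE.
rewrite sumI [X in _ <= X]sumI -(big_imset _ (in2W rho_inj)) /=; set B := rho @: I.
rewrite (big_setID I) [X in _ <= X](big_setID B) /= setIC lerD2l.
have card_diff : #|B :\: I| = #|I :\: B|.
  have := cardsID I B; have := cardsID B I; rewrite setIC card_imset //; lia.
have cross :
    (\sum_(j in B :\: I) z j) *+ #|I :\: B| <= (\sum_(i in I :\: B) z i) *+ #|B :\: I|.
  rewrite -!sumr_const [X in _ <= X]exchange_big /=.
  apply: ler_sum => i; rewrite inE => /andP [_ iI].
  apply: ler_sum => j; rewrite inE => /andP [jI _].
  by apply: z_noninc; move: iI jI; rewrite !inE; lia.
case: (posnP #|I :\: B|) => [IB0|pos]; last by move: cross; rewrite card_diff ler_pMn2r.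
move: (IB0); rewrite -{1}card_diff => BI0.
by move/eqP: IB0; move/eqP: BI0; rewrite !cards_eq0 => /eqP -> /eqP ->; rewrite !big_set0.
Qed.

(* The extension of w by 0 beyond D: it supplies the term w_D = 0 of the Abel
   summation below. *)
Definition ext0 (w : 'I_D -> R) (n : nat) : R := if insub n is Some d then w d else 0.

Lemma ext0_ord w (d : 'I_D) : ext0 w d = w d.
Proof. by rewrite /ext0 valK. Qed.

Lemma ext0_out w n : (D <= n)%N -> ext0 w n = 0.
Proof. by move=> Dn; rewrite /ext0 insubF // ltnNge Dn. Qed.

Lemma abel_summation (w a : 'I_D -> R) :
  \sum_d w d * a d = \sum_(e < D) (w e - ext0 w e.+1) * \sum_(d : 'I_D | (d <= e)%N) a d.
Proof.
under [RHS]eq_bigr do rewrite mulr_sumr.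
rewrite (exchange_big_dep xpredT) //=; apply: eq_bigr => d _; rewrite -mulr_suml.
congr (_ * _); under eq_bigr do rewrite -ext0_ord.
rewrite (eq_bigl (fun e : 'I_D => xpredT e && (d <= e)%N)) //.
rewrite -(big_geq_mkord d D xpredT (fun e => ext0 w e - ext0 w e.+1)).
rewrite (telescope_sumr_eq (fun n => - ext0 w n)) ?(ext0_out _ (leqnn D)) ?ext0_ord.
- by rewrite oppr0 sub0r opprK.
- exact: ltnW.
- by move=> k _; rewrite opprK addrC.
Qed.

Lemma rearrangement_le (w z : 'I_D -> R) (rho : 'I_D -> 'I_D) :
  {homo w : d f / (d <= f)%N >-> f <= d} -> (forall d, 0 <= w d) ->
  {homo z : d f / (d <= f)%N >-> f <= d} -> injective rho ->
  \sum_d w d * z (rho d) <= \sum_d w d * z d.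
Proof.
move=> w_noninc w_ge0 z_noninc rho_inj.
rewrite abel_summation [X in _ <= X]abel_summation.
apply: ler_sum => e _; apply: ler_wpM2l; last by apply: prefix_sum_inj_le.
case: (ltnP e.+1 D) => [lt_eD|]; last by move/ext0_out ->; rewrite subr0.
by rewrite -[e.+1]/(val (Ordinal lt_eD)) ext0_ord subr_ge0 w_noninc.
Qed.

End Rearrangement.

Section GGIPermutations.
Variables (R : realType) (D : nat) (w : 'I_D -> R).
Hypotheses (w_noninc : {homo w : d f / (d <= f)%N >-> f <= d}) (w_ge0 : forall d, 0 <= w d).

Lemma GGI_sorted_perm (x : 'cV[R]_D) : exists tau : 'S_D,
  GGI w x = \sum_d w d * x (tau d) 0 /\
  {homo (fun d => x (tau d) 0) : d f / (d <= f)%N >-> f <= d}.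
Proof.
rewrite /GGI /=; set s := sort _ _.
have /tuple_permP [tau s_tau] : perm_eq s [tuple x i 0 | i < D].
  by rewrite perm_sort.
have s_nth (d : 'I_D) : nth 0 s d = x (tau d) 0.
  by rewrite s_tau -tnth_nth !tnth_mktuple.
exists tau; split; first by apply: eq_bigr => d _; rewrite s_nth.
move=> d f le_df; rewrite -!s_nth.
have size_s : size s = D by rewrite size_sort size_map size_enum_ord.
have s_sorted : sorted (fun a b : R => b <= a) s.
  by apply: sort_sorted => a b; rewrite le_total.
apply: (sorted_leq_nth _ _ 0 s_sorted); rewrite ?inE ?size_s //.
by move=> a b c ba cb; apply: le_trans cb ba.
Qed.

Lemma perm_sum_le_GGI (x : 'cV[R]_D) (s : 'S_D) : \sum_d w d * x (s d) 0 <= GGI w x.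
Proof.
have [tau [-> x_tau_noninc]] := GGI_sorted_perm x.
under eq_bigr => d _ do rewrite -[s d](permKV tau) -(permM s).
exact: (rearrangement_le (z := fun d => x (tau d) 0)) (@perm_inj _ _).
Qed.

End GGIPermutations.

Section L1Norm.
Variables (R : realType) (K : nat).

Definition l1norm (v : 'cV[R]_K) : R := \sum_k `|v k 0|.

Lemma l1norm_ge0 v : 0 <= l1norm v.
Proof. exact: sumr_ge0. Qed.

Lemma l1norm_0 : l1norm 0 = 0.
Proof. by rewrite /l1norm big1 // => k _; rewrite mxE normr0. Qed.

Lemma l1norm_convex (J : finType) (l : J -> R) (u : J -> 'cV[R]_K) :
  (forall j, 0 <= l j) -> l1norm (\sum_j l j *: u j) <= \sum_j l j * l1norm (u j).
Proof.
move=> l_ge0; under [X in _ <= X]eq_bigr do rewrite mulr_sumr.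
rewrite [X in _ <= X]exchange_big /=; apply: ler_sum => k _.
rewrite summxE; apply: le_trans (ler_norm_sum _ _ _) _.
by apply: ler_sum => j _; rewrite mxE normrM ger0_norm.
Qed.

Lemma enorm_le_l1norm (v : 'cV[R]_K) : enorm v <= l1norm v.
Proof.
rewrite /enorm -[X in _ <= X]ger0_norm ?l1norm_ge0 // -sqrtr_sqr ler_sqrt ?sqr_ge0 //.
rewrite /l1norm expr2 mulr_suml; apply: ler_sum => k _.
rewrite -(real_normK (num_real (v k 0))) expr2; apply: ler_wpM2l => //.
by rewrite (bigD1 k) //= lerDl; apply: sumr_ge0.
Qed.

Lemma enorm_gt0 (v : 'cV[R]_K) : v != 0 -> 0 < enorm v.
Proof.
move=> v_neq0; have [k vk_neq0] : exists k, v k 0 != 0.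
  apply/existsP; apply: contraR v_neq0; rewrite negb_exists => /forallP v0.
  by apply/eqP/matrixP => i j; rewrite (ord1 j) mxE; apply/eqP/negPn/v0.
rewrite /enorm sqrtr_gt0 (bigD1 k) //= ltr_wpDr ?sumr_ge0 // => [i _|].
  exact: sqr_ge0.
by rewrite -(real_normK (num_real (v k 0))) exprn_gt0 // normr_gt0.
Qed.

End L1Norm.

Definition minimizer (R : realType) (K : nat) (S : 'cV[R]_K -> Prop) (f : 'cV[R]_K -> R)
  (x : 'cV[R]_K) : Prop := S x /\ forall y, S y -> f x <= f y.

Section PolytopeEpigraph.
Variables (R : realType) (K : nat) (S : 'cV[R]_K -> Prop) (f : 'cV[R]_K -> R).
Variables (J : finType) (q : J -> 'cV[R]_K * R^o).
Hypothesis hull_epi : forall x t, hull q (x, t) -> S x /\ f x <= t.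
Hypothesis epi_hull : forall x, S x -> hull q (x, f x).
Variable j0 : J.

Let h j : R := (q j).2.
Let jmin := [arg min_(j < j0) h j]%O.
Let m := h jmin.

Let m_le j : m <= h j.
Proof. by rewrite /m /jmin; case: arg_minP => // i _; apply. Qed.

Lemma epi_weights x : S x -> exists l : J -> R,
  [/\ forall j, 0 <= l j, \sum_j l j = 1, x = \sum_j l j *: (q j).1
    & f x = \sum_j l j * h j].
Proof.
move/epi_hull=> [l [l_ge0 [l_sum1 xfx]]]; exists l; split=> //.
  by rewrite -[x]/((x, f x).1) xfx raddf_sum.
by rewrite -[f x]/((x, f x).2) xfx raddf_sum.
Qed.

Let min_le y : S y -> m <= f y.
Proof. by case/epi_weights=> l [l_ge0 l_sum1 _ ->]; apply: convex_comb_ge. Qed.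

Let S_jmin : S (q jmin).1 /\ f (q jmin).1 <= m.
Proof. by apply: hull_epi; rewrite -surjective_pairing; apply: hull_point. Qed.

Let optimal : {pred J} := fun j => h j == m.

Lemma minimizer_hull x :
  minimizer S f x <-> hull (fun k : {j in optimal} => (q (val k)).1) x.
Proof.
split=> [[Sx x_min]|].
  have [l [l_ge0 l_sum1 x_eq fx]] := epi_weights Sx.
  have l_opt j : j \notin optimal -> l j = 0.
    have fx_m : \sum_j l j * (h j - m) = 0.
      rewrite (eq_bigr _ (fun j _ => mulrBr _ _ _)) sumrB -fx -mulr_suml l_sum1 mul1r.
      apply/eqP; rewrite subr_eq0 eq_le (min_le Sx) andbT.
      exact: le_trans (x_min _ S_jmin.1) S_jmin.2.
    move=> j_nopt; have /eqP : l j * (h j - m) = 0.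
      by apply: (psumr_eq0P _ fx_m) => // k _; rewrite mulr_ge0 ?subr_ge0.
    by rewrite mulf_eq0 subr_eq0 => /orP [/eqP //|hj_m]; case/negP: j_nopt.
  have restrict (W : nmodType) (F : J -> W) : (forall j, j \notin optimal -> F j = 0) ->
      \sum_j F j = \sum_(j in optimal) F j.
    by move=> F0; rewrite [LHS](bigID (mem optimal)) /= [X in _ + X]big1 ?addr0.
  rewrite x_eq restrict => [|j /l_opt ->]; last by rewrite scale0r.
  by apply: hull_sub_sum => //; rewrite -(restrict _ l).
case=> l [l_ge0 [l_sum1 ->]].
have /hull_epi [Sx fx_m] : hull q (\sum_k l k *: (q (val k)).1, m).
  apply: (@hull_subfamily _ _ _ optimal); exists l; do !split=> //.
  rewrite [RHS]surjective_pairing !raddf_sum /=; congr pair.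
  under [RHS]eq_bigr => k _ do rewrite -[(q _).2]/(h (val k)) (eqP (valP k)).
  by rewrite -[LHS]mul1r -l_sum1 mulr_suml.
by split=> // y /min_le; apply: le_trans.
Qed.

(* Optimal vertices get gap 1 so that delta > 0 even if all vertices are optimal. *)
Let gap j := if optimal j then 1 else h j - m.
Let delta := gap [arg min_(j < j0) gap j]%O.

Let M := 1 + \sum_j l1norm ((q j).1 - (q jmin).1).

Let gap_gt0 j : 0 < gap j.
Proof.
rewrite /gap /optimal; case: ifP => // /negbT hj_m.
by rewrite subr_gt0 lt_def hj_m m_le.
Qed.

Let delta_le j : delta <= gap j.
Proof. by rewrite /delta; case: arg_minP => // i _; apply. Qed.

Lemma minimizer_polytope : convex_polytope (minimizer S f).
Proof.
exists #|{: {j in optimal}}|, (fun i => (q (val (enum_val i))).1) => x.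
by rewrite minimizer_hull; apply: hull_enum.
Qed.

Let proj j := if optimal j then (q j).1 else (q jmin).1.
Let nonopt_weight (l : J -> R) := \sum_j l j * (~~ optimal j)%:R.

Let proj_minimizer (l : J -> R) : (forall j, 0 <= l j) -> \sum_j l j = 1 ->
  minimizer S f (\sum_j l j *: proj j).
Proof.
move=> l_ge0 l_sum1; apply/minimizer_hull; apply: (@hull_trans _ _ _ _ _ proj).
  move=> j; rewrite /proj; case: ifP => [opt_j|_].
    exact: (hull_point _ (Sub j opt_j : {j in optimal})).
  exact: (hull_point _ (Sub jmin (eqxx m) : {j in optimal})).
by exists l.
Qed.

Let excess_ge (l : J -> R) : (forall j, 0 <= l j) -> \sum_j l j = 1 ->
  delta * nonopt_weight l <= \sum_j l j * h j - m.
Proof.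
move=> l_ge0 l_sum1; rewrite -[m]mul1r -l_sum1 mulr_suml -sumrB mulr_sumr.
apply: ler_sum => j _; rewrite -mulrBr mulrCA; apply: ler_wpM2l => //.
by have := delta_le j; rewrite /gap; case: ifP => _ /=; rewrite ?mulr0 ?mulr1 ?subr_ge0.
Qed.

Let dist_le (l : J -> R) : (forall j, 0 <= l j) ->
  enorm (\sum_j l j *: (q j).1 - \sum_j l j *: proj j) <= M * nonopt_weight l.
Proof.
move=> l_ge0; apply: le_trans (enorm_le_l1norm _) _.
rewrite -sumrB (eq_bigr _ (fun j _ => esym (scalerBr _ _ _))).
apply: le_trans (l1norm_convex _ l_ge0) _; rewrite mulr_sumr; apply: ler_sum => j _.
rewrite mulrCA; apply: ler_wpM2l => //; rewrite /proj; case: ifP => _ /=.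
  by rewrite subrr l1norm_0 mulr0.
rewrite mulr1 /M (bigD1 j) //= addrCA lerDl addr_ge0 // sumr_ge0 // => k _.
exact: l1norm_ge0.
Qed.

Lemma minimum_sharp : exists g : R, 0 < g /\
  forall x, S x -> ~ minimizer S f x ->
    exists2 a, minimizer S f a & g <= (f x - f a) / enorm (x - a).
Proof.
have M_gt0 : 0 < M by rewrite ltr_pwDl // sumr_ge0 // => j _; apply: l1norm_ge0.
exists (delta / M); split=> [|x Sx x_nmin]; first by rewrite divr_gt0 //; apply: gap_gt0.
have [l [l_ge0 l_sum1 x_eq fx]] := epi_weights Sx.
have a_min := proj_minimizer l_ge0 l_sum1; set a := \sum_j _ *: _ in a_min.
exists a => //; have := excess_ge l_ge0 l_sum1; rewrite -fx => excess.
have := dist_le l_ge0; rewrite -x_eq -/a => dist.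
have fa_le : f a <= m := le_trans (a_min.2 _ S_jmin.1) S_jmin.2.
have e_gt0 : 0 < enorm (x - a).
  by apply: enorm_gt0; rewrite subr_eq0; apply/eqP => xa; apply: x_nmin; rewrite xa.
rewrite ler_pdivlMr // mulrAC ler_pdivrMr //.
apply: le_trans (ler_wpM2l (ltW (gap_gt0 _)) dist) _.
rewrite mulrCA [X in _ <= X]mulrC ler_wpM2l ?(ltW M_gt0) //.
by apply: le_trans excess _; rewrite lerD2l lerN2.
Qed.

End PolytopeEpigraph.

Theorem epigraph_polytope_argmin (R : realType) (K : nat) (S : 'cV[R]_K -> Prop)
    (f : 'cV[R]_K -> R) (J : finType) (q : J -> 'cV[R]_K * R^o) :
  (forall x t, hull q (x, t) -> S x /\ f x <= t) ->
  (forall x, S x -> hull q (x, f x)) ->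
  convex_polytope (minimizer S f) /\
  exists g : R, 0 < g /\ forall x, S x -> ~ minimizer S f x ->
    exists2 a, minimizer S f a & g <= (f x - f a) / enorm (x - a).
Proof.
move=> hull_epi epi_hull; case: (pickP (fun _ : J => true)) => [j0 _|J0].
  split; first exact: minimizer_polytope hull_epi epi_hull j0.
  exact: minimum_sharp hull_epi epi_hull j0.
have sum_J0 (l : J -> R) : \sum_j l j <> 1.
  by rewrite big_pred0 // => /eqP; rewrite eq_sym oner_eq0.
have S0 x : ~ S x by move/epi_hull=> [l [_ [/sum_J0]]].
split; last by exists 1; split=> // x /S0.
exists 0, (fun=> 0) => x; split=> [[/S0]|[l [_ [l_sum1 _]]]] //.
by move: l_sum1; rewrite big_ord0 => /eqP; rewrite eq_sym oner_eq0.
Qed.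

Section GGIEpigraph.
Variables (R : realType) (D K : nat) (mu : 'M[R]_(D, K)) (w : 'I_D -> R).
Hypotheses (mu01 : forall i j, 0 <= mu i j <= 1) (w01 : forall d, 0 <= w d <= 1).
Hypothesis w_noninc : {homo w : d e / (d <= e)%N >-> e <= d}.

Definition ggi_piece (s : 'S_D) (x : 'cV[R]_K) : R := \sum_d w d * (mu *m x) (s d) 0.

Let w_ge0 d : 0 <= w d. Proof. by case/andP: (w01 d). Qed.

Lemma ggi_obj_piece x : exists s, ggi_obj w mu x = ggi_piece s x.
Proof. by rewrite /ggi_obj; have [s [-> _]] := GGI_sorted_perm w (mu *m x); exists s. Qed.

Lemma ggi_piece_le s x : ggi_piece s x <= ggi_obj w mu x.
Proof. exact: perm_sum_le_GGI w w_noninc w_ge0 _ _. Qed.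

Lemma ggi_piece_bounds s x : simplex x -> 0 <= ggi_piece s x <= D%:R.
Proof.
case=> x_ge0 x_sum1; have mux01 i : 0 <= (mu *m x) i 0 <= 1.
  rewrite mxE sumr_ge0 => [|k _]; last by rewrite mulr_ge0 //; case/andP: (mu01 i k).
  rewrite -x_sum1 ler_sum // => k _; rewrite ler_piMl //; by case/andP: (mu01 i k).
rewrite sumr_ge0 => [|d _]; last by rewrite mulr_ge0 //; case/andP: (mux01 (s d)).
have -> : D%:R = \sum_(d < D) (1 : R) by rewrite sumr_const card_ord.
rewrite ler_sum // => d _.
by case/andP: (w01 d) => ? ?; case/andP: (mux01 (s d)) => ? ?; rewrite mulr_ile1.
Qed.

Local Notation V := ('cV[R]_K * R^o)%type.

Definition epigraph_form (s : 'S_D) (v : V) : R := ggi_piece s v.1 - v.2.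

Lemma epigraph_form_scalar s : scalar (epigraph_form s).
Proof.
move=> a u v; rewrite /epigraph_form /ggi_piece /= mulmxDr -scalemxAr.
have -> : \sum_d w d * (a *: (mu *m u.1) + mu *m v.1) (s d) 0 =
    a * \sum_d w d * (mu *m u.1) (s d) 0 + \sum_d w d * (mu *m v.1) (s d) 0.
  rewrite mulr_sumr -big_split; apply: eq_bigr => d _.
  by move: (mu *m _) (mu *m _) => A B; rewrite !mxE /=; ring.
by rewrite -[a *: u.2]/(a * u.2); ring.
Qed.

HB.instance Definition _ s :=
  GRing.isLinear.Build R V R *%R (epigraph_form s) (epigraph_form_scalar s).

(* D + 1 bounds f on the simplex and is positive even when D = 0. *)
Definition prism (kb : 'I_K * bool) : V := (delta_mx kb.1 0, if kb.2 then D.+1%:R else 0).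

Lemma prism_simplex v : hull prism v -> simplex v.1.
Proof.
move/(hull_linear fst) => hull_fst; apply/simplex_hull.
by apply: (hull_trans _ hull_fst) => kb; apply: hull_point.
Qed.

Lemma prism_hull x t : simplex x -> 0 <= t <= D.+1%:R -> hull prism (x, t).
Proof.
pose T (b : bool) : R^o := if b then D.+1%:R else 0.
move/simplex_hull=> hull_x /andP [t_ge0 t_le]; apply: (hull_pair (T := T) hull_x).
pose a := t / D.+1%:R; have a_ge0 : 0 <= a by rewrite divr_ge0.
have a_le1 : a <= 1 by rewrite ler_pdivrMr ?mul1r.
have -> : t = a *: (D.+1%:R : R^o) + (1 - a) *: (0 : R^o).
  by rewrite scaler0 addr0 /a -[_ *: _]/(t / _ * _) divfK // pnatr_eq0.
by apply: (hull_segment T true false); rewrite ?subr_ge0 // addrC subrK.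
Qed.

End GGIEpigraph.

Theorem lemma3 (R : realType) (D K : nat) (mu : 'M[R]_(D, K)) (w : 'I_D -> R)
  (hmu : forall i j, 0 <= mu i j <= 1)
  (hw : forall d, 0 <= w d <= 1)
  (hwdec : forall d e : 'I_D, (d < e)%N -> w e < w d) :
  convex_polytope (argmin_set w mu) /\
  exists g : R, 0 < g /\
    forall a : 'cV[R]_K, simplex a -> ~ argmin_set w mu a ->
      exists2 a' : 'cV[R]_K, argmin_set w mu a' &
        g <= (ggi_obj w mu a - ggi_obj w mu a') / enorm (a - a').
Proof.
have w_noninc : {homo w : d e / (d <= e)%N >-> e <= d}.
  by move=> d e; rewrite leq_eqVlt => /predU1P [/val_inj ->|/hwdec/ltW].
have [J [q hq]] := hull_halfspaces (@prism R D K) (fun s => epigraph_form mu w s).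
apply: (epigraph_polytope_argmin (q := q)) => [x t /hq [/prism_simplex Sx t_ge]|x Sx].
  by split=> //; have [s ->] := ggi_obj_piece mu w x; rewrite -subr_le0 t_ge.
apply/hq; split=> [|s]; last by rewrite /epigraph_form /= subr_le0 ggi_piece_le.
have [s ->] := ggi_obj_piece mu w x.
have /andP [piece_ge0 piece_le] := ggi_piece_bounds hmu hw s Sx.
by apply: prism_hull; rewrite // piece_ge0 (le_trans piece_le) // ler_nat.
Qed.
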